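(* Let $M_{cc}$ be the one-state Turing machine defined below. The language $L_{cc}=\{x\in\{u,0,h\}^*\mid M_{cc}\text{ halts on input }x\}$ is not context-free.
   Context: A one-state Turing machine is a tuple $\langle \{q\}, \Sigma, \Gamma, q, H, \delta\rangle$ with the following components: a unique state $q$; an input alphabet $\Sigma$ not containing the blank symbol $\sqcup$; a tape alphabet $\Gamma\supseteq\Sigma\cup\{\sqcup\}$; a set of halting symbols $H\subseteq\Gamma$; and a transition function $\delta:\Gamma\setminus H\to\Gamma\times\{L,R\}$. The tape is infinite in both directions. On input $x$, the tape holds $x$ with blanks everywhere else, and the head starts on the leftmost symbol of $x$. At each step, if the scanned symbol is in $H$, the machine halts. Otherwise, with $\delta(a)=(b,D)$ for the scanned symbol $a$, it writes $b$ and moves one cell in direction $D$. The machine $M_{cc}$ is this kind of machine with $\Sigma=\{u,0,h\}$, $\Gamma=\{\sqcup,u,U,h,0,1,Z,C,B\}$, $H=\{h\}$, and transitions $\delta(u)=(U,R)$, $\delta(0)=(1,L)$, $\delta(U)=(C,R)$, $\delta(1)=(Z,R)$, $\delta(Z)=(0,L)$, $\delta(C)=(B,L)$, $\delta(B)=(C,R)$, $\delta(\sqcup)=(\sqcup,L)$. *)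

From Stdlib Require Import ZArith List Relations Bool.
Import ListNotations.
Open Scope Z_scope.

Inductive dir := DL | DR.

(* A one-state TM over tape alphabet G: blank symbol, halting-symbol
   predicate H, and transition function delta (only consulted on symbols
   not in H, as in the paper's delta : Gamma \ H -> Gamma x {L,R}). *)
Record OneStateTM (G : Type) := {
  blank : G;
  halting : G -> bool;
  delta : G -> G * dir
}.
Arguments blank {G}. Arguments halting {G}. Arguments delta {G}.

Definition config (G : Type) : Type := ((Z -> G) * Z)%type.

Definition step {G} (M : OneStateTM G) (c : config G) : config G :=
  let '(t, p) := c in
  if halting M (t p) then c else
  let '(b, d) := delta M (t p) in
  ((fun i => if Z.eqb i p then b else t i),
   match d with DL => p - 1 | DR => p + 1 end).

Fixpoint run {G} (M : OneStateTM G) (n : nat) (c : config G) : config G :=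
  match n with O => c | S n' => run M n' (step M c) end.

Definition init_config {G} (M : OneStateTM G) (x : list G) : config G :=
  ((fun i => if andb (0 <=? i) (i <? Z.of_nat (length x))
             then nth (Z.to_nat i) x (blank M) else blank M), 0).

Definition halts {G} (M : OneStateTM G) (x : list G) : Prop :=
  exists n : nat, let '(t, p) := run M n (init_config M x) in
                  halting M (t p) = true.

Inductive gam := Gblank | Gu | GU | Gh | G0 | G1 | GZ | GC | GB.
Inductive sig := Su | S0 | Sh.

Definition sig_to_gam (a : sig) : gam :=
  match a with Su => Gu | S0 => G0 | Sh => Gh end.

Definition Mcc : OneStateTM gam := {|
  blank := Gblank;
  halting := fun a => match a with Gh => true | _ => false end;
  delta := fun a => match a with
    | Gu => (GU, DR)
    | G0 => (G1, DL)
    | GU => (GC, DR)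
    | G1 => (GZ, DR)
    | GZ => (G0, DL)
    | GC => (GB, DL)
    | GB => (GC, DR)
    | Gblank => (Gblank, DL)
    | Gh => (Gh, DR) (* irrelevant: h is halting *)
    end
|}.

Definition L_cc (x : list sig) : Prop := halts Mcc (map sig_to_gam x).

Record cfg (T : Type) := {
  cfg_start : nat;
  cfg_rules : list (nat * list (nat + T))
}.
Arguments cfg_start {T}. Arguments cfg_rules {T}.

Definition cfg_step {T} (g : cfg T) (s s' : list (nat + T)) : Prop :=
  exists (l r : list (nat + T)) (A : nat) (rhs : list (nat + T)),
    In (A, rhs) (cfg_rules g) /\ s = l ++ inl A :: r /\ s' = l ++ rhs ++ r.

Definition cfg_derives {T} (g : cfg T) : relation (list (nat + T)) :=
  clos_refl_trans _ (cfg_step g).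

Definition cfg_generates {T} (g : cfg T) (w : list T) : Prop :=
  cfg_derives g [inl (cfg_start g)] (map inr w).

Definition context_free {T} (L : list T -> Prop) : Prop :=
  exists g : cfg T, forall w, L w <-> cfg_generates g w.

From Stdlib Require Import ZArith List Relations Lia Classical.
Import ListNotations.
Open Scope Z_scope.

(* The initial sweep turns the
   u's into a unary store of n credits U; the 0-block then acts as a binary counter which is
   incremented 2^k - 1 times, each increment paying one credit (a U becomes a C).  If the store
   suffices the head reaches h and the machine halts; otherwise the head falls off the left end
   of the input and walks left forever.  Hence u^n 0^k h is in L_cc iff 2^k <= n + 1
   (Mcc_block_word).

   Part II proves a pumping lemma for grammars refined by a finite automaton: long generated
   words factor as x y z v r with y v nonempty, all x y^i z v^i r being generated and leading
   the automaton to the same state (cfg_pumping_automaton).  It is proved on parse trees: a long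
   yield contains a long chain of nested proper subtrees, and the labels (nonterminal, entry
   state, exit state) of the chain must repeat.

   Part III applies it with the automaton for u* 0* h to u^(2^k-1) 0^k h: the pumped words
   remain block words u^n 0^k' h in L_cc, but then 2^k' <= n + 1 with k' and n linear in the
   pumping index, which is impossible. *)

(** * Part I: the behaviour of [Mcc] on the words u^n 0^k h *)

Definition reach (c c' : config gam) : Prop := exists n, run Mcc n c = c'.

Lemma run_add (n m : nat) (c : config gam) : run Mcc (n + m) c = run Mcc m (run Mcc n c).
Proof. revert c; induction n; simpl; auto. Qed.

Lemma reach_refl (c : config gam) : reach c c.
Proof. exists 0%nat; reflexivity. Qed.

Lemma reach_trans (c1 c2 c3 : config gam) : reach c1 c2 -> reach c2 c3 -> reach c1 c3.
Proof. intros [n H1] [m H2]. exists (n + m)%nat. rewrite run_add, H1; exact H2. Qed.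

Definition upd (t : Z -> gam) (p : Z) (s : gam) : Z -> gam :=
  fun i => if Z.eqb i p then s else t i.

Lemma upd_eq t p s i : i = p -> upd t p s i = s.
Proof. intros ->. unfold upd. now rewrite Z.eqb_refl. Qed.

Lemma upd_neq t p s i : i <> p -> upd t p s i = t i.
Proof. intros H. unfold upd. now rewrite (proj2 (Z.eqb_neq i p) H). Qed.

Definition move (p : Z) (d : dir) : Z := match d with DL => p - 1 | DR => p + 1 end.

Lemma reach_move t p a b d :
  t p = a -> halting Mcc a = false -> delta Mcc a = (b, d) -> reach (t, p) (upd t p b, move p d).
Proof.
  intros Ha Hh Hd. exists 1%nat. cbn [run]. unfold step. rewrite Ha, Hh, Hd. reflexivity.
Qed.

Lemma sweep_right s s' : halting Mcc s = false -> delta Mcc s = (s', DR) ->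
  forall (j : nat) t p, (forall i, p <= i < p + Z.of_nat j -> t i = s) ->
  exists t', reach (t, p) (t', p + Z.of_nat j) /\
    (forall i, p <= i < p + Z.of_nat j -> t' i = s') /\
    (forall i, ~ (p <= i < p + Z.of_nat j) -> t' i = t i).
Proof.
  intros Hh Hd. induction j as [|j IH]; intros t p Ht.
  - exists t. rewrite Z.add_0_r. split; [apply reach_refl|]. split; intros; [lia|reflexivity].
  - pose proof (reach_move t p s s' DR (Ht p ltac:(lia)) Hh Hd) as R1.
    destruct (IH (upd t p s') (p + 1)) as [t' [R2 [H1 H2]]].
    { intros i Hi. rewrite upd_neq by lia. apply Ht. lia. }
    exists t'. split; [|split].
    + replace (p + Z.of_nat (S j)) with (p + 1 + Z.of_nat j) by lia. eapply reach_trans; eauto.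
    + intros i Hi. destruct (Z.eq_dec i p) as [->|Hne].
      * rewrite H2 by lia. now apply upd_eq.
      * apply H1. lia.
    + intros i Hi. rewrite H2 by lia. apply upd_neq. lia.
Qed.

Lemma sweep_left s s' : halting Mcc s = false -> delta Mcc s = (s', DL) ->
  forall (j : nat) t p, (forall i, p - Z.of_nat j < i <= p -> t i = s) ->
  exists t', reach (t, p) (t', p - Z.of_nat j) /\
    (forall i, p - Z.of_nat j < i <= p -> t' i = s') /\
    (forall i, ~ (p - Z.of_nat j < i <= p) -> t' i = t i).
Proof.
  intros Hh Hd. induction j as [|j IH]; intros t p Ht.
  - exists t. rewrite Z.sub_0_r. split; [apply reach_refl|]. split; intros; [lia|reflexivity].
  - pose proof (reach_move t p s s' DL (Ht p ltac:(lia)) Hh Hd) as R1.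
    destruct (IH (upd t p s') (p - 1)) as [t' [R2 [H1 H2]]].
    { intros i Hi. rewrite upd_neq by lia. apply Ht. lia. }
    exists t'. split; [|split].
    + replace (p - Z.of_nat (S j)) with (p - 1 - Z.of_nat j) by lia. eapply reach_trans; eauto.
    + intros i Hi. destruct (Z.eq_dec i p) as [->|Hne].
      * rewrite H2 by lia. now apply upd_eq.
      * apply H1. lia.
    + intros i Hi. rewrite H2 by lia. apply upd_neq. lia.
Qed.

(* The unary credit store left of the counter: blanks before cell 0, then [a] unspent
   credits [U] on [0, a) and [b] spent credits [C] on [a, a + b). *)
Definition credit_tape (t : Z -> gam) (a b : Z) : Prop :=
  0 <= a /\ 0 <= b /\ (forall i, i < 0 -> t i = Gblank) /\
  (forall i, 0 <= i < a -> t i = GU) /\ (forall i, a <= i < a + b -> t i = GC).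

Lemma credit_tape_frame t t' a b :
  credit_tape t a b -> (forall i, i < a + b -> t' i = t i) -> credit_tape t' a b.
Proof.
  intros (Ha & Hb & Hneg & HU & HC) E.
  repeat split; auto; intros i Hi; rewrite E by lia; auto with zarith.
Qed.

(* Spending a credit: from the right end [n - 1] of the store, the head sweeps left over the
   [C]s (turning them into [B]s), turns the last [U] into [C], and sweeps back right. *)
Lemma spend_credit t a b n : credit_tape t a b -> n = a + b -> 1 <= a ->
  exists t', reach (t, n - 1) (t', n) /\ credit_tape t' (a - 1) (b + 1) /\
             (forall i, n <= i -> t' i = t i).
Proof.
  intros Hg Hn Ha1. pose proof Hg as (Ha & Hb & Hneg & HU & HC).
  destruct (sweep_left GC GB eq_refl eq_refl (Z.to_nat b) t (n - 1)) as [t1 [R1 [B1 E1]]].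
  { intros i Hi. apply HC. lia. }
  rewrite Z2Nat.id in * by lia.
  assert (Hu : t1 (n - 1 - b) = GU) by (rewrite E1 by lia; apply HU; lia).
  pose proof (reach_move _ _ _ _ _ Hu eq_refl eq_refl) as R2. simpl in R2.
  destruct (sweep_right GB GC eq_refl eq_refl (Z.to_nat b) (upd t1 (n - 1 - b) GC) (n - 1 - b + 1))
    as [t3 [R3 [C3 E3]]].
  { intros i Hi. rewrite upd_neq by lia. apply B1. lia. }
  rewrite Z2Nat.id in * by lia.
  assert (Outside : forall i, ~ (n - 1 - b <= i < n) -> t3 i = t i).
  { intros i Hi. rewrite E3, upd_neq, E1 by lia. reflexivity. }
  exists t3. split; [|split].
  - replace n with (n - 1 - b + 1 + b) at 2 by lia.
    eapply reach_trans; [exact R1|]. eapply reach_trans; eauto.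
  - repeat split; try lia.
    + intros i Hi. rewrite Outside by lia. auto.
    + intros i Hi. rewrite Outside by lia. apply HU. lia.
    + intros i Hi. destruct (Z.eq_dec i (n - 1 - b)) as [->|Hne].
      * rewrite E3 by lia. now apply upd_eq.
      * apply C3. lia.
  - intros i Hi. apply Outside. lia.
Qed.

(* A configuration is lost when the head is left of the input and sees only blanks at and
   left of it: since [delta blank = (blank, L)], the machine then walks left forever. *)
Definition lost (c : config gam) : Prop :=
  let '(t, p) := c in p < 0 /\ forall i, i <= p -> t i = Gblank.

(* With no credit left, the sweep over the spent credits falls off the input. *)
Lemma no_credit_lost t b : credit_tape t 0 b -> exists c, reach (t, b - 1) c /\ lost c.
Proof.
  intros (Ha & Hb & Hneg & HU & HC).
  destruct (sweep_left GC GB eq_refl eq_refl (Z.to_nat b) t (b - 1)) as [t1 [R1 [_ E1]]].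
  { intros i Hi. apply HC. lia. }
  rewrite Z2Nat.id in * by lia.
  exists (t1, -1). split; [replace (-1) with (b - 1 - b) by lia; exact R1|].
  split; [lia|]. intros i Hi. rewrite E1 by lia. apply Hneg. lia.
Qed.

Lemma lost_step c : lost c -> lost (step Mcc c).
Proof.
  destruct c as [t p]. intros [Hp Ht]. unfold step. rewrite (Ht p) by lia.
  split; [lia|]. intros i Hi. destruct (Z.eqb_spec i p); auto. apply Ht; lia.
Qed.

Lemma lost_run (n : nat) (c : config gam) : lost c -> lost (run Mcc n c).
Proof. revert c; induction n; simpl; auto using lost_step. Qed.

Lemma run_halted (n : nat) t p : halting Mcc (t p) = true -> run Mcc n (t, p) = (t, p).
Proof.
  intros H. induction n as [|n IH]; [reflexivity|].
  change (run Mcc n (step Mcc (t, p)) = (t, p)).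
  unfold step. rewrite H. exact IH.
Qed.

Lemma lost_never_halts x c : reach (init_config Mcc x) c -> lost c -> ~ halts Mcc x.
Proof.
  assert (Nh : forall c, lost c -> let '(t, p) := c in halting Mcc (t p) = false).
  { intros [t p] [Hp Ht]. rewrite Ht by lia. reflexivity. }
  intros [m Hm] Hl [n Hn].
  destruct (run Mcc n (init_config Mcc x)) as [t p] eqn:E.
  destruct (Nat.le_gt_cases n m).
  - replace m with (n + (m - n))%nat in Hm by lia.
    rewrite run_add, E, run_halted in Hm by exact Hn. subst c.
    specialize (Nh _ Hl). cbv beta iota in Nh. congruence.
  - replace n with (m + (n - m))%nat in E by lia. rewrite run_add, Hm in E.
    specialize (Nh _ (lost_run (n - m) c Hl)). rewrite E in Nh. congruence.
Qed.

(* The 0-block [n, n + k) is a binary counter, least significant bit first, with digits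
   [Z] (set) and [0]/[1] (clear/carry).  A carry out of the [k] set bits: the first clear bit
   becomes [1], the set bits are cleared on the way back, and the head returns to the credit
   store, whose contents are untouched. *)
Lemma carry t a b n (k : nat) : credit_tape t a b -> n = a + b ->
  (forall i, n <= i < n + Z.of_nat k -> t i = GZ) -> t (n + Z.of_nat k) = G0 ->
  exists t', reach (t, n + Z.of_nat k) (t', n - 1) /\ credit_tape t' a b /\
    (forall i, n <= i < n + Z.of_nat k -> t' i = G0) /\ t' (n + Z.of_nat k) = G1 /\
    (forall i, n + Z.of_nat k < i -> t' i = t i).
Proof.
  intros Hg Hn HZ H0.
  pose proof (reach_move _ _ _ _ _ H0 eq_refl eq_refl) as R1. simpl in R1.
  destruct (sweep_left GZ G0 eq_refl eq_refl k (upd t (n + Z.of_nat k) G1) (n + Z.of_nat k - 1))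
    as [t' [R2 [Z2 E2]]].
  { intros i Hi. rewrite upd_neq by lia. apply HZ. lia. }
  replace (n + Z.of_nat k - 1 - Z.of_nat k) with (n - 1) in * by lia.
  exists t'. split; [eapply reach_trans; eauto|]. split; [|split; [|split]].
  - apply (credit_tape_frame t); auto. intros i Hi. rewrite E2, upd_neq by lia. reflexivity.
  - intros i Hi. apply Z2. lia.
  - rewrite E2 by lia. now apply upd_eq.
  - intros i Hi. rewrite E2, upd_neq by lia. reflexivity.
Qed.

Lemma pow2_succ (k : nat) : 2 ^ Z.of_nat (S k) = 2 * 2 ^ Z.of_nat k.
Proof. rewrite Nat2Z.inj_succ, Z.pow_succ_r by lia. reflexivity. Qed.

Lemma pow2_pos (k : nat) : 1 <= 2 ^ Z.of_nat k.
Proof. induction k; [simpl; lia|]. rewrite pow2_succ; lia. Qed.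

(* Counting a clear [k]-bit counter up to all-set takes [2^k - 1] increments, each paid by
   one credit: with enough credits the head leaves the block to the right. *)
Lemma count_up : forall (k : nat) t a b n, credit_tape t a b -> n = a + b ->
  (forall i, n <= i < n + Z.of_nat k -> t i = G0) -> 2 ^ Z.of_nat k - 1 <= a ->
  exists t', reach (t, n) (t', n + Z.of_nat k) /\
    credit_tape t' (a - (2 ^ Z.of_nat k - 1)) (b + (2 ^ Z.of_nat k - 1)) /\
    (forall i, n <= i < n + Z.of_nat k -> t' i = GZ) /\ (forall i, n + Z.of_nat k <= i -> t' i = t i).
Proof.
  induction k as [|k IH]; intros t a b n Hg Hn H0 Ha.
  - exists t. simpl. replace (n + 0) with n by lia.
    rewrite Z.sub_0_r, Z.add_0_r.
    split; [apply reach_refl|]. split; [exact Hg|]. split; intros; [lia|reflexivity].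
  - rewrite pow2_succ in *. set (P := 2 ^ Z.of_nat k) in *. pose proof (pow2_pos k) as HP.
    fold P in HP.
    (* count the low [k] bits up, carry into bit [k], pay, count the low bits up again *)
    destruct (IH t a b n Hg Hn) as [t1 [R1 [S1 [Z1 E1]]]]; [intros i Hi; apply H0; lia | lia |].
    destruct (carry t1 _ _ n k S1 ltac:(lia) Z1) as [t2 [R2 [S2 [Z2 [B2 E2]]]]].
    { rewrite E1 by lia. apply H0. lia. }
    destruct (spend_credit t2 _ _ n S2) as [t3 [R3 [S3 E3]]]; [lia | lia |].
    destruct (IH t3 (a - (P - 1) - 1) (b + (P - 1) + 1) n S3) as [t4 [R4 [S4 [Z4 E4]]]];
      [lia | intros i Hi; rewrite E3 by lia; apply Z2; lia | lia |].
    assert (B4 : t4 (n + Z.of_nat k) = G1) by (rewrite E4, E3 by lia; exact B2).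
    pose proof (reach_move _ _ _ _ _ B4 eq_refl eq_refl) as R5. simpl in R5.
    exists (upd t4 (n + Z.of_nat k) GZ). split; [|split; [|split]].
    + replace (n + Z.of_nat (S k)) with (n + Z.of_nat k + 1) by lia.
      eapply reach_trans; [exact R1|]. eapply reach_trans; [exact R2|].
      eapply reach_trans; [exact R3|]. eapply reach_trans; [exact R4|]. exact R5.
    + replace (a - (2 * P - 1)) with (a - (P - 1) - 1 - (P - 1)) by lia.
      replace (b + (2 * P - 1)) with (b + (P - 1) + 1 + (P - 1)) by lia.
      apply (credit_tape_frame t4); auto. intros i Hi. apply upd_neq. lia.
    + intros i Hi. destruct (Z.eq_dec i (n + Z.of_nat k)) as [->|Hne]; [now apply upd_eq|].
      rewrite upd_neq by lia. apply Z4. lia.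
    + intros i Hi. rewrite upd_neq, E4, E3, E2, E1 by lia. reflexivity.
Qed.

(* With fewer than [2^k - 1] credits the counter cannot be filled: some carry finds the
   store empty and the machine gets lost. *)
Lemma count_up_fails : forall (k : nat) t a b n, credit_tape t a b -> n = a + b ->
  (forall i, n <= i < n + Z.of_nat k -> t i = G0) -> a < 2 ^ Z.of_nat k - 1 ->
  exists c, reach (t, n) c /\ lost c.
Proof.
  induction k as [|k IH]; intros t a b n Hg Hn H0 Ha.
  - simpl in Ha. destruct Hg; lia.
  - rewrite pow2_succ in *. set (P := 2 ^ Z.of_nat k) in *.
    destruct (Z_lt_le_dec a (P - 1)) as [Hlt|Hge].
    { apply (IH t a b n Hg Hn); auto. intros i Hi; apply H0; lia. }
    destruct (count_up k t a b n Hg Hn) as [t1 [R1 [S1 [Z1 E1]]]]; [intros i Hi; apply H0; lia | lia |].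
    destruct (carry t1 _ _ n k S1 ltac:(lia) Z1) as [t2 [R2 [S2 [Z2 _]]]].
    { rewrite E1 by lia. apply H0. lia. }
    assert (R12 : reach (t, n) (t2, n - 1)) by (eapply reach_trans; eauto).
    destruct (Z.eq_dec (a - (P - 1)) 0) as [Hz|Hnz].
    + assert (S2' : credit_tape t2 0 (b + (P - 1))) by (rewrite <- Hz; exact S2).
      destruct (no_credit_lost t2 _ S2') as [c [R3 L3]].
      exists c. split; [|exact L3]. eapply reach_trans; [exact R12|].
      replace (n - 1) with (b + (P - 1) - 1) by lia. exact R3.
    + destruct (spend_credit t2 _ _ n S2) as [t3 [R3 [S3 E3]]]; [lia | lia |].
      destruct (IH t3 (a - (P - 1) - 1) (b + (P - 1) + 1) n S3) as [c [R4 L4]];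
        [lia | intros i Hi; rewrite E3 by lia; apply Z2; lia | lia |].
      exists c. split; [|exact L4]. eapply reach_trans; [exact R12|]. eapply reach_trans; eauto.
Qed.

Definition block_word (n k : nat) : list sig := repeat Su n ++ repeat S0 k ++ [Sh].

Lemma nth_repeat_app {A} (a d : A) (n j : nat) (l : list A) :
  nth j (repeat a n ++ l) d = if (j <? n)%nat then a else nth (j - n) l d.
Proof.
  destruct (Nat.ltb_spec j n).
  - rewrite app_nth1 by (rewrite repeat_length; lia). apply nth_repeat_lt. lia.
  - rewrite app_nth2, repeat_length by (rewrite repeat_length; lia). reflexivity.
Qed.

Lemma init_tape_inside x i : 0 <= i < Z.of_nat (length x) ->
  fst (init_config Mcc x) i = nth (Z.to_nat i) x Gblank.
Proof.
  intros Hi. simpl.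
  replace (0 <=? i) with true by (symmetry; apply Z.leb_le; lia).
  replace (i <? _) with true by (symmetry; apply Z.ltb_lt; lia). reflexivity.
Qed.

Lemma init_block_tape n k : let t := fst (init_config Mcc (map sig_to_gam (block_word n k))) in
  (forall i, i < 0 -> t i = Gblank) /\ (forall i, 0 <= i < Z.of_nat n -> t i = Gu) /\
  (forall i, Z.of_nat n <= i < Z.of_nat n + Z.of_nat k -> t i = G0) /\
  t (Z.of_nat n + Z.of_nat k) = Gh.
Proof.
  assert (Len : Z.of_nat (length (map sig_to_gam (block_word n k))) = Z.of_nat n + Z.of_nat k + 1).
  { rewrite length_map. unfold block_word. rewrite !length_app, !repeat_length. simpl. lia. }
  assert (Cell : forall i, 0 <= i <= Z.of_nat n + Z.of_nat k ->
    fst (init_config Mcc (map sig_to_gam (block_word n k))) i =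
    if (Z.to_nat i <? n)%nat then Gu else if (Z.to_nat i - n <? k)%nat then G0 else Gh).
  { intros i Hi. rewrite init_tape_inside by lia. unfold block_word.
    rewrite !map_app, !map_repeat, !nth_repeat_app.
    destruct (Z.to_nat i <? n)%nat, (Z.to_nat i - n <? k)%nat eqn:E; try reflexivity.
    apply Nat.ltb_ge in E. replace (Z.to_nat i - n - k)%nat with 0%nat by lia. reflexivity. }
  simpl fst in Cell |- *. split; [|split; [|split]].
  - intros i Hi. replace (0 <=? i) with false by (symmetry; apply Z.leb_gt; lia). reflexivity.
  - intros i Hi. rewrite Cell by lia.
    replace (Z.to_nat i <? n)%nat with true by (symmetry; apply Nat.ltb_lt; lia). reflexivity.
  - intros i Hi. rewrite Cell by lia.
    replace (Z.to_nat i <? n)%nat with false by (symmetry; apply Nat.ltb_ge; lia).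
    replace (Z.to_nat i - n <? k)%nat with true by (symmetry; apply Nat.ltb_lt; lia). reflexivity.
  - rewrite Cell by lia.
    replace (Z.to_nat _ <? n)%nat with false by (symmetry; apply Nat.ltb_ge; lia).
    replace (Z.to_nat _ - n <? k)%nat with false by (symmetry; apply Nat.ltb_ge; lia). reflexivity.
Qed.

(* Main property of [Mcc]: the [n] u's pay for the [2^k - 1] increments of the 0-block. *)
Lemma Mcc_block_word (n k : nat) : L_cc (block_word n k) <-> (2 ^ k <= n + 1)%nat.
Proof.
  unfold L_cc. destruct (init_block_tape n k) as (Hneg & HU & H0 & Hh).
  set (t := fst _) in *.
  assert (Init : init_config Mcc (map sig_to_gam (block_word n k)) = (t, 0)) by reflexivity.
  (* the u's are turned into unspent credits *)
  destruct (sweep_right Gu GU eq_refl eq_refl n t 0) as [t1 [R1 [U1 E1]]].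
  { intros i Hi. apply HU. lia. }
  simpl in R1.
  assert (S1 : credit_tape t1 (Z.of_nat n) 0).
  { repeat split; try lia.
    - intros i Hi. rewrite E1 by lia. auto.
    - intros i Hi. apply U1. lia. }
  assert (Z1 : forall i, Z.of_nat n <= i < Z.of_nat n + Z.of_nat k -> t1 i = G0).
  { intros i Hi. rewrite E1 by lia. auto. }
  assert (Pow : Z.of_nat (2 ^ k) = 2 ^ Z.of_nat k) by (rewrite Nat2Z.inj_pow; reflexivity).
  split.
  - intros Halt. destruct (Nat.le_gt_cases (2 ^ k) (n + 1)) as [|Hlt]; [assumption|exfalso].
    destruct (count_up_fails k t1 (Z.of_nat n) 0 (Z.of_nat n) S1 ltac:(lia) Z1) as [c [R L]]; [lia|].
    apply (lost_never_halts (map sig_to_gam (block_word n k)) c); auto.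
    rewrite Init. eapply reach_trans; eauto.
  - intros Hle.
    destruct (count_up k t1 (Z.of_nat n) 0 (Z.of_nat n) S1 ltac:(lia) Z1) as [t2 [R [_ [_ E2]]]]; [lia|].
    destruct (reach_trans _ _ _ R1 R) as [m Hm]. exists m. rewrite Init, Hm.
    rewrite E2, E1, Hh by lia. reflexivity.
Qed.

(** * Part II: a pumping lemma for grammars, refined by a finite automaton *)

Open Scope nat_scope.

Fixpoint rep {A} (l : list A) (i : nat) : list A :=
  match i with 0 => [] | S i => l ++ rep l i end.

Definition pump {A} (x y z v r : list A) (i : nat) : list A := x ++ rep y i ++ z ++ rep v i ++ r.

Lemma rep_comm {A} (l : list A) (i : nat) : rep l i ++ l = l ++ rep l i.
Proof. induction i; simpl; [now rewrite app_nil_r|]. now rewrite <- app_assoc, IHi. Qed.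

Section Grammar.
Variable T : Type.
Variable g : cfg T.
Notation sym := (nat + T)%type.
Notation der := (cfg_derives g).

Lemma derives_context s s' l r : der s s' -> der (l ++ s ++ r) (l ++ s' ++ r).
Proof.
  intros H. revert l r. induction H as [s s' Hs | s | s1 s2 s3 _ IH1 _ IH2]; intros l0 r0.
  - destruct Hs as (l & r & A & rhs & Hin & -> & ->). apply rt_step.
    exists (l0 ++ l), (r ++ r0), A, rhs. rewrite <- !app_assoc. repeat split; auto.
  - apply rt_refl.
  - eapply rt_trans; [apply IH1 | apply IH2].
Qed.

Lemma derives_app s1 s1' s2 s2' : der s1 s1' -> der s2 s2' -> der (s1 ++ s2) (s1' ++ s2').
Proof.
  intros H1 H2. eapply rt_trans.
  - exact (derives_context _ _ [] s2 H1).
  - pose proof (derives_context _ _ s1' [] H2) as H. rewrite !app_nil_r in H. exact H.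
Qed.

Lemma derives_rule A rhs : In (A, rhs) (cfg_rules g) -> der [inl A] rhs.
Proof. intros Hin. apply rt_step. exists [], [], A, rhs. rewrite app_nil_r. repeat split; auto. Qed.

Inductive gtree : nat -> list T -> Prop :=
| gt_node A rhs w : In (A, rhs) (cfg_rules g) -> gforest rhs w -> gtree A w
with gforest : list sym -> list T -> Prop :=
| gf_nil : gforest [] []
| gf_term a s w : gforest s w -> gforest (inr a :: s) (a :: w)
| gf_nonterm A s w1 w2 : gtree A w1 -> gforest s w2 -> gforest (inl A :: s) (w1 ++ w2).

Scheme gtree_mind := Induction for gtree Sort Prop
with gforest_mind := Induction for gforest Sort Prop.

Lemma gforest_app s1 w1 s2 w2 : gforest s1 w1 -> gforest s2 w2 -> gforest (s1 ++ s2) (w1 ++ w2).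
Proof.
  intros H. induction H; intros H2; simpl; auto.
  - constructor; auto.
  - rewrite <- app_assoc. constructor; auto.
Qed.

Lemma gforest_split s1 s2 w : gforest (s1 ++ s2) w ->
  exists w1 w2, w = w1 ++ w2 /\ gforest s1 w1 /\ gforest s2 w2.
Proof.
  revert w. induction s1 as [|a s1 IH]; intros w H; simpl in H.
  - exists [], w. repeat split; auto. constructor.
  - inversion H; subst.
    + destruct (IH _ H3) as (w1 & w2 & -> & Ha & Hb). exists (a0 :: w1), w2.
      repeat split; auto. constructor; auto.
    + destruct (IH _ H4) as (u1 & u2 & -> & Ha & Hb). exists (w1 ++ u1), u2.
      rewrite app_assoc. repeat split; auto. constructor; auto.
Qed.

Lemma gforest_terminals w : gforest (map inr w) w.
Proof. induction w; simpl; constructor; auto. Qed.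

Lemma gforest_step_back s s' w : cfg_step g s s' -> gforest s' w -> gforest s w.
Proof.
  intros (l & r & A & rhs & Hin & -> & ->) H.
  destruct (gforest_split _ _ _ H) as (w1 & w2 & -> & H1 & H2).
  destruct (gforest_split _ _ _ H2) as (u1 & u2 & -> & H3 & H4).
  apply gforest_app; auto. constructor; auto. econstructor; eauto.
Qed.

Lemma derives_gforest s w : der s (map inr w) -> gforest s w.
Proof.
  intros H. apply clos_rt_rt1n_iff in H. remember (map inr w) as t.
  induction H; subst; [apply gforest_terminals | eapply gforest_step_back; eauto].
Qed.

Lemma gtree_derives : forall A w, gtree A w -> der [inl A] (map inr w)
with gforest_derives : forall s w, gforest s w -> der s (map inr w).
Proof.
  - intros A w H. destruct H as [A rhs w Hin Hf].
    eapply rt_trans; [apply derives_rule, Hin | apply gforest_derives, Hf].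
  - intros s w H. destruct H as [|a s w Hf|A s w1 w2 Ht Hf].
    + apply rt_refl.
    + apply (derives_app [inr a] [inr a]); [apply rt_refl | apply gforest_derives, Hf].
    + rewrite map_app. apply (derives_app [inl A]); [apply gtree_derives, Ht | apply gforest_derives, Hf].
Qed.

Lemma gtree_root A w : gtree A w -> In A (map fst (cfg_rules g)).
Proof. intros H; destruct H. apply in_map_iff. exists (A, rhs); auto. Qed.

Definition width : nat := S (list_max (map (fun rule => length (snd rule)) (cfg_rules g))).

Lemma rhs_lt_width A rhs : In (A, rhs) (cfg_rules g) -> length rhs < width.
Proof.
  intros H. unfold width. set (lens := map (fun rule : nat * list sym => length (snd rule)) _).
  assert (Bound : Forall (fun k => k <= list_max lens) lens) by (apply list_max_le; lia).
  rewrite Forall_forall in Bound.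
  apply in_map with (f := fun rule : nat * list sym => length (snd rule)), Bound in H. simpl in H. lia.
Qed.

Definition descends (A : nat) (w : list T) : Prop :=
  width < length w -> exists y C v w',
    der [inl A] (map inr y ++ inl C :: map inr v) /\ gtree C w' /\ w = y ++ w' ++ v /\
    length w' < length w /\ length w <= width * length w' + width.

Definition heavy_child (s : list sym) (w : list T) : Prop :=
  length s < length w -> exists y C v w',
    der s (map inr y ++ inl C :: map inr v) /\ gtree C w' /\ descends C w' /\
    w = y ++ w' ++ v /\ length w <= length s * (length w' + 1).

(* The root: its heavy child is a proper subtree unless it spans the whole yield, in which
   case we descend further into it. *)
Lemma descends_node A rhs w : In (A, rhs) (cfg_rules g) -> heavy_child rhs w -> descends A w.
Proof.
  intros Hin Hchild Hlen. pose proof (rhs_lt_width _ _ Hin) as Hr.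
  destruct (Hchild ltac:(lia)) as (y & C & v & w' & D & Gt & Desc & -> & Share).
  assert (DA : der [inl A] (map inr y ++ inl C :: map inr v))
    by (eapply rt_trans; [apply derives_rule, Hin | exact D]).
  rewrite !length_app in *.
  destruct y as [|a y]; [destruct v as [|b v]|].
  - cbn [app length map] in *. rewrite app_nil_r in *.
    destruct (Desc ltac:(lia)) as (y2 & C2 & v2 & w2 & D2 & Gt2 & -> & L1 & L2).
    exists y2, C2, v2, w2. repeat split; auto; [eapply rt_trans; eauto | lia..].
  - exists [], C, (b :: v), w'. cbn [app length map] in *. repeat split; auto; nia.
  - exists (a :: y), C, v, w'. cbn [app length map] in *. repeat split; auto; nia.
Qed.

Lemma heavy_child_term a s w : heavy_child s w -> heavy_child (inr a :: s) (a :: w).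
Proof.
  intros IH Hlen. simpl in Hlen.
  destruct (IH ltac:(lia)) as (y & C & v & w' & D & Gt & Desc & -> & Share).
  exists (a :: y), C, v, w'. repeat split; auto.
  - apply (derives_app [inr a] [inr a]); [apply rt_refl | exact D].
  - simpl in *. nia.
Qed.

(* A forest [A s]: the heavy child is [A] itself or the heavy child of [s], whichever
   has the longer yield. *)
Lemma heavy_child_nonterm A s w1 w2 : gtree A w1 -> descends A w1 -> gforest s w2 ->
  heavy_child s w2 -> heavy_child (inl A :: s) (w1 ++ w2).
Proof.
  intros Gt Desc Hf IH Hlen. simpl in Hlen. rewrite length_app in Hlen.
  assert (DA : der (inl A :: s) (map inr [] ++ inl A :: map inr w2)).
  { apply (derives_app [inl A] [inl A]); [apply rt_refl | apply gforest_derives, Hf]. }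
  destruct (le_lt_dec (length w2) (length s)) as [Hs|Hs].
  - exists [], A, w2, w1. repeat split; auto. simpl. rewrite length_app. nia.
  - destruct (IH Hs) as (y & C & v & w' & D & Gt' & Desc' & -> & Share).
    destruct (le_lt_dec (length w') (length w1)) as [Hc|Hc].
    + exists [], A, (y ++ w' ++ v), w1. repeat split; auto. simpl. rewrite !length_app in *. nia.
    + exists (w1 ++ y), C, v, w'. repeat split; auto.
      * rewrite map_app, <- app_assoc. apply (derives_app [inl A]); [apply gtree_derives|]; auto.
      * now rewrite <- app_assoc.
      * simpl. rewrite !length_app in *. nia.
Qed.

Lemma gtree_descends A w : gtree A w -> descends A w.
Proof.
  intros H. apply (gtree_mind (fun A w _ => descends A w) (fun s w _ => heavy_child s w)).
  - intros A' rhs w' Hin _. now apply descends_node.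
  - intros Hlen. simpl in Hlen. lia.
  - intros a s w' _. apply heavy_child_term.
  - intros A' s w1 w2 Gt Desc Hf. now apply heavy_child_nonterm.
  - exact H.
Qed.

Variables (Q : Type) (next : Q -> T -> Q) (q0 : Q) (states : list Q).
Hypothesis states_complete : forall q, In q states.

Definition state (w : list T) : Q := fold_left next w q0.

Definition label (B : nat) (x w : list T) : nat * (Q * Q) := (B, (state x, state (x ++ w))).
Definition entry_label (e : nat * list T * list T) : nat * (Q * Q) :=
  let '(B, x, w) := e in label B x w.
Definition labels : list (nat * (Q * Q)) :=
  list_prod (map fst (cfg_rules g)) (list_prod states states).

Lemma label_in_labels B x w : In B (map fst (cfg_rules g)) -> In (label B x w) labels.
Proof. intros H. unfold label, labels. apply in_prod; [exact H | apply in_prod; auto]. Qed.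

Notation start := (cfg_start g).

Definition pumpable (W : list T) : Prop := exists x y z v r B,
  W = x ++ y ++ z ++ v ++ r /\ y ++ v <> [] /\
  der [inl start] (map inr x ++ inl B :: map inr r) /\
  der [inl B] (map inr y ++ inl B :: map inr v) /\ der [inl B] (map inr z) /\
  state x = state (x ++ y) /\ state (x ++ y ++ z) = state (x ++ y ++ z ++ v).

Definition encloses (e : nat * list T * list T) (A : nat) (x w r : list T) : Prop :=
  let '(B, xb, wb) := e in
  In B (map fst (cfg_rules g)) /\ exists y v rb, x = xb ++ y /\ wb = y ++ w ++ v /\
  r = v ++ rb /\ y ++ v <> [] /\ der [inl B] (map inr y ++ inl A :: map inr v) /\
  der [inl start] (map inr xb ++ inl B :: map inr rb).

Lemma repeated_label_pumpable W anc A x w r :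
  In (label A x w) (map entry_label anc) -> Forall (fun e => encloses e A x w r) anc ->
  gtree A w -> W = x ++ w ++ r -> pumpable W.
Proof.
  intros Hin Anc Gt HW.
  apply in_map_iff in Hin as [[[B xb] wb] [He Hin]].
  rewrite Forall_forall in Anc. specialize (Anc _ Hin).
  destruct Anc as (_ & y & v & rb & -> & -> & -> & Hne & D1 & D2).
  injection He as -> E1 E2.
  exists xb, y, w, v, rb, A. repeat split; auto.
  - subst W. now rewrite <- !app_assoc.
  - now apply gtree_derives.
  - now rewrite E2, <- app_assoc.
Qed.

Lemma distinct_labels_bounded anc A x w r : In A (map fst (cfg_rules g)) ->
  Forall (fun e => encloses e A x w r) anc -> NoDup (label A x w :: map entry_label anc) ->
  length anc < length labels.
Proof.
  intros HA Anc ND. apply NoDup_incl_length with (l' := labels) in ND.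
  - simpl in ND. rewrite length_map in ND. lia.
  - intros l [<-|Hl]; [now apply label_in_labels|].
    apply in_map_iff in Hl as [[[B xb] wb] [<- Hin]].
    rewrite Forall_forall in Anc. apply label_in_labels, (Anc _ Hin).
Qed.

Lemma encloses_descend anc A x w r y C v w' :
  In A (map fst (cfg_rules g)) -> der [inl start] (map inr x ++ inl A :: map inr r) ->
  Forall (fun e => encloses e A x w r) anc ->
  der [inl A] (map inr y ++ inl C :: map inr v) -> y ++ v <> [] -> w = y ++ w' ++ v ->
  Forall (fun e => encloses e C (x ++ y) w' (v ++ r)) ((A, x, w) :: anc).
Proof.
  intros HA DS Anc D Hne ->. constructor.
  - split; [exact HA|]. exists y, v, r. auto 7.
  - rewrite Forall_forall in Anc |- *. intros [[B xb] wb] Hin.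
    destruct (Anc _ Hin) as (HB & y1 & v1 & rb & -> & -> & -> & Hne1 & D1 & D2).
    split; [exact HB|]. exists (y1 ++ y), (v ++ v1), rb. repeat split.
    + now rewrite app_assoc.
    + now rewrite <- !app_assoc.
    + now rewrite app_assoc.
    + intros E. apply app_eq_nil in E as [E1 E2]. apply app_eq_nil in E1 as [_ ->].
      apply app_eq_nil in E2 as [-> _]. auto.
    + eapply rt_trans; [exact D1|].
      pose proof (derives_context _ _ (map inr y1) (map inr v1) D) as H.
      rewrite !map_app, <- !app_assoc. simpl. rewrite <- !app_assoc in H. exact H.
    + exact D2.
Qed.

(* The yield bound [(width + 1)^(j + 1)] exceeds [width] at every stage of the chain. *)
Lemma pow_succ_ge (m j : nat) : m + 1 <= (m + 1) ^ (j + 1).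
Proof.
  induction j; [simpl; lia|]. replace (S j + 1) with (S (j + 1)) by lia. rewrite Nat.pow_succ_r'. nia.
Qed.

(* Walking down a chain of proper subtrees, each at least a [width+1]-th of its parent:
   a yield longer than [(width+1)^(j+1)] allows [j] more steps, and after
   [length labels] steps in total some label must repeat. *)
Lemma descent_chain_pumpable W : forall j anc A x w r,
  der [inl start] (map inr x ++ inl A :: map inr r) -> gtree A w -> W = x ++ w ++ r ->
  NoDup (map entry_label anc) -> Forall (fun e => encloses e A x w r) anc ->
  length labels <= length anc + j -> (width + 1) ^ (j + 1) < length w -> pumpable W.
Proof.
  induction j as [|j IH]; intros anc A x w r DS Gt HW ND Anc Hcount Hlen;
    (destruct (classic (In (label A x w) (map entry_label anc))) as [Hin|Hnew];
     [eapply repeated_label_pumpable; eauto|]).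
  - exfalso. pose proof (distinct_labels_bounded anc A x w r (gtree_root _ _ Gt) Anc
                           ltac:(constructor; auto)). lia.
  - pose proof (pow_succ_ge width (S j)) as Hp.
    destruct (gtree_descends A w Gt ltac:(lia)) as (y & C & v & w' & D & Gt' & -> & L1 & L2).
    assert (Hne : y ++ v <> []).
    { intros E. apply app_eq_nil in E as [-> ->]. simpl in L1. rewrite app_nil_r in L1. lia. }
    apply (IH ((A, x, y ++ w' ++ v) :: anc) C (x ++ y) w' (v ++ r)); auto.
    + eapply rt_trans; [exact DS|].
      pose proof (derives_context _ _ (map inr x) (map inr r) D) as H.
      rewrite !map_app, <- !app_assoc. simpl. rewrite <- !app_assoc in H. exact H.
    + subst W. now rewrite <- !app_assoc.
    + simpl. constructor; auto.
    + apply encloses_descend; auto. apply (gtree_root _ _ Gt).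
    + simpl. lia.
    + replace (S j + 1) with (S (j + 1)) in Hlen by lia. rewrite Nat.pow_succ_r' in Hlen.
      pose proof (pow_succ_ge width j). rewrite !length_app in *. nia.
Qed.

Lemma generated_pumpable W :
  cfg_generates g W -> (width + 1) ^ (length labels + 1) < length W -> pumpable W.
Proof.
  intros H Hlen. apply derives_gforest in H.
  inversion H as [| |A s w1 w2 Ht Hf]; subst. inversion Hf; subst. rewrite app_nil_r in *.
  apply (descent_chain_pumpable _ (length labels) [] start [] w1 []); simpl; auto using NoDup_nil.
  - apply rt_refl.
  - now rewrite app_nil_r.
Qed.

Lemma rep_derives B y z v : der [inl B] (map inr y ++ inl B :: map inr v) ->
  der [inl B] (map inr z) -> forall i, der [inl B] (map inr (rep y i ++ z ++ rep v i)).
Proof.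
  intros D1 D2 i. induction i as [|i IH]; simpl; [now rewrite app_nil_r|].
  eapply rt_trans; [exact D1|].
  pose proof (derives_context _ _ (map inr y) (map inr v) IH) as H.
  rewrite <- (rep_comm v i), !map_app, <- !app_assoc. rewrite !map_app, <- !app_assoc in H. exact H.
Qed.

Lemma state_loop (y : list T) (q : Q) :
  fold_left next y q = q -> forall i, fold_left next (rep y i) q = q.
Proof. intros H i. induction i; simpl; auto. now rewrite fold_left_app, H. Qed.

Lemma cfg_pumping_automaton : exists p, forall W, cfg_generates g W -> p < length W ->
  exists x y z v r, W = x ++ y ++ z ++ v ++ r /\ y ++ v <> [] /\
    forall i, cfg_generates g (pump x y z v r i) /\ state (pump x y z v r i) = state W.
Proof.
  exists ((width + 1) ^ (length labels + 1)). intros W HW Hlen.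
  destruct (generated_pumpable W HW Hlen) as (x & y & z & v & r & B & -> & Hne & D1 & D2 & D3 & E1 & E2).
  exists x, y, z, v, r. split; [reflexivity|]. split; [exact Hne|]. intros i. split.
  - eapply rt_trans; [exact D1|]. unfold pump.
    pose proof (derives_context _ _ (map inr x) (map inr r) (rep_derives B y z v D2 D3 i)) as H.
    rewrite !map_app. rewrite !map_app in H. simpl in H. rewrite <- !app_assoc in H. exact H.
  - unfold state, pump in *. rewrite !fold_left_app in *.
    rewrite <- E1 in E2 |- *. rewrite (state_loop y _ (eq_sym E1)), (state_loop v _ (eq_sym E2)).
    now rewrite <- E2.
Qed.

End Grammar.

(** * Part III: [L_cc] is not context-free *)

Inductive shape := InU | InZero | Done | Dead.

Definition shape_next (q : shape) (a : sig) : shape :=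
  match q, a with
  | InU, Su => InU | InU, S0 => InZero | InU, Sh => Done
  | InZero, S0 => InZero | InZero, Sh => Done
  | _, _ => Dead
  end.

Definition shape_states : list shape := [InU; InZero; Done; Dead].

Lemma shape_states_complete q : In q shape_states.
Proof. destruct q; simpl; auto. Qed.

Lemma shape_dead w : fold_left shape_next w Dead = Dead.
Proof. induction w; simpl; auto. Qed.

Lemma shape_done w : fold_left shape_next w Done = Done -> w = [].
Proof. destruct w; simpl; auto. rewrite shape_dead. discriminate. Qed.

Lemma shape_in_zero w : fold_left shape_next w InZero = Done -> exists k, w = repeat S0 k ++ [Sh].
Proof.
  induction w as [|[] w IH]; simpl; try discriminate.
  - rewrite shape_dead. discriminate.
  - intros H. destruct (IH H) as [k ->]. now exists (S k).
  - intros H. apply shape_done in H as ->. now exists 0.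
Qed.

Lemma shape_in_u w : fold_left shape_next w InU = Done -> exists n k, w = block_word n k.
Proof.
  induction w as [|[] w IH]; simpl; try discriminate.
  - intros H. destruct (IH H) as [n [k ->]]. now exists (S n), k.
  - intros H. destruct (shape_in_zero _ H) as [k ->]. now exists 0, (S k).
  - intros H. apply shape_done in H as ->. now exists 0, 0.
Qed.

Lemma shape_block_word n k : fold_left shape_next (block_word n k) InU = Done.
Proof.
  unfold block_word. induction n as [|n IH]; simpl; [|exact IH].
  destruct k as [|k]; simpl; [reflexivity|]. induction k; simpl; auto.
Qed.

Definition sig_eq_dec (a b : sig) : {a = b} + {a <> b}.
Proof. decide equality. Defined.

Definition count (a : sig) (l : list sig) : nat := count_occ sig_eq_dec l a.

Lemma count_app a l1 l2 : count a (l1 ++ l2) = count a l1 + count a l2.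
Proof. apply count_occ_app. Qed.

Lemma count_rep a l i : count a (rep l i) = i * count a l.
Proof. induction i; simpl; auto. rewrite count_app, IHi. lia. Qed.

Lemma count_pump a x y z v r i :
  count a (pump x y z v r i) = count a (x ++ z ++ r) + i * count a (y ++ v).
Proof. unfold pump. rewrite !count_app, !count_rep. lia. Qed.

Lemma length_count l : length l = count Su l + count S0 l + count Sh l.
Proof. induction l as [|a l IH]; simpl; auto. unfold count in *. destruct a; simpl; lia. Qed.

Lemma count_block_word n k :
  count Su (block_word n k) = n /\ count S0 (block_word n k) = k /\ count Sh (block_word n k) = 1.
Proof.
  assert (Same : forall a m, count a (repeat a m) = m).
  { intros a m. induction m; simpl; auto. unfold count in *. simpl. destruct sig_eq_dec; congruence. }
  assert (Other : forall a b m, a <> b -> count b (repeat a m) = 0).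
  { intros a b m Hab. induction m; simpl; auto. unfold count in *. simpl. destruct sig_eq_dec; congruence. }
  unfold block_word. rewrite !count_app, !Same, !Other by discriminate. simpl. lia.
Qed.

Lemma square_le_pow2 n : 4 <= n -> n * n <= 2 ^ n.
Proof.
  intros H. induction n as [|n IH]; [lia|]. destruct (Nat.eq_dec n 3) as [->|Hn]; [simpl; lia|].
  rewrite Nat.pow_succ_r'. specialize (IH ltac:(lia)). nia.
Qed.

Lemma exponential_not_linear a b c d : 1 <= b + d -> 2 ^ (a + b) = c + d + 1 ->
  ~ (forall i, 2 ^ (a + i * b) <= c + i * d + 1).
Proof.
  intros Hbd Htight Hall. destruct b as [|b].
  - specialize (Hall 0). rewrite !Nat.mul_0_l, !Nat.add_0_r in Hall.
    rewrite Nat.add_0_r in Htight. lia.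
  - set (i := c + d + 5). specialize (Hall i).
    assert (2 ^ i <= 2 ^ (a + i * S b)) by (apply Nat.pow_le_mono_r; nia).
    pose proof (square_le_pow2 i ltac:(unfold i; lia)). unfold i in *. nia.
Qed.

(* Pumping the word u^(2^k - 1) 0^k h while staying among the block words of [L_cc] is
   impossible: the letter counts grow linearly in the pumping index. *)
Lemma tight_block_word_not_pumpable x y z v r N k :
  x ++ y ++ z ++ v ++ r = block_word N k -> 2 ^ k = N + 1 -> y ++ v <> [] ->
  ~ (forall i, exists n k', pump x y z v r i = block_word n k' /\ 2 ^ k' <= n + 1).
Proof.
  intros EW Htight Hne Hall.
  assert (CW : forall a, count a (block_word N k) = count a (x ++ z ++ r) + count a (y ++ v)).
  { intros a. rewrite <- EW, !count_app. lia. }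
  assert (Bound : forall i, 2 ^ (count S0 (x ++ z ++ r) + i * count S0 (y ++ v)) <=
                   count Su (x ++ z ++ r) + i * count Su (y ++ v) + 1 /\
                   count Sh (x ++ z ++ r) + i * count Sh (y ++ v) = 1).
  { intros i. destruct (Hall i) as (n & k' & E & Hk). rewrite <- !count_pump, E.
    destruct (count_block_word n k') as (-> & -> & ->). auto. }
  destruct (count_block_word N k) as (Wu & W0 & Wh). rewrite CW in Wu, W0, Wh.
  apply (exponential_not_linear (count S0 (x ++ z ++ r)) (count S0 (y ++ v))
           (count Su (x ++ z ++ r)) (count Su (y ++ v))).
  - destruct (Bound 0) as [_ H0]. pose proof (length_count (y ++ v)) as L.
    assert (1 <= length (y ++ v)) by (destruct (y ++ v); [congruence | simpl; lia]). lia.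
  - rewrite W0, Wu. exact Htight.
  - intros i. apply (Bound i).
Qed.

Theorem theorem3 : ~ context_free L_cc.
Proof.
  intros [g Hg].
  destruct (cfg_pumping_automaton sig g shape shape_next InU shape_states shape_states_complete)
    as [p Hp].
  (* the word u^(2^p - 1) 0^p h lies in [L_cc] and is longer than the pumping length *)
  set (N := 2 ^ p - 1).
  assert (Htight : 2 ^ p = N + 1) by (pose proof (Nat.pow_nonzero 2 p); unfold N; lia).
  assert (HW : cfg_generates g (block_word N p)) by (apply Hg, Mcc_block_word; lia).
  destruct (Hp _ HW) as (x & y & z & v & r & EW & Hne & Hpump).
  { unfold block_word. rewrite !length_app, !repeat_length. simpl. lia. }
  apply (tight_block_word_not_pumpable x y z v r N p); auto.
  (* every pumped word is generated, hence in [L_cc], and still a block word *)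
  intros i. destruct (Hpump i) as [Gen Shape].
  unfold state in Shape. rewrite shape_block_word in Shape.
  destruct (shape_in_u _ Shape) as (n & k & E). exists n, k. split; [exact E|].
  apply Mcc_block_word. rewrite <- E. apply Hg, Gen.
Qed.
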